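(* Let $k\ge 2$ and let $U$ be an intersecting family of polynomials over $\mathbb{F}_q$ of degree at most $k$. Let $c,\alpha,\beta\in\mathbb{F}_q$ and suppose $U$ contains more than $(q-1)q^{k-2}$ polynomials $h_i$ whose coefficient of $x^k$ equals $c$ and which satisfy $h_i(\alpha)=\beta$. Then every polynomial $f\in U$ whose coefficient of $x^k$ is not $c$ satisfies $f(\alpha)=\beta$.
   Context: A set of polynomials over $\mathbb{F}_q$ is intersecting if for any two members $f_1,f_2$ the graphs $\{(x,f_i(x)):x\in\mathbb{F}_q\}$ share at least one point. *)

From HB Require Import structures.
From mathcomp Require Import all_boot all_order all_algebra all_field.
From mathcomp Require Import finmap.
Set Implicit Arguments. Unset Strict Implicit. Unset Printing Implicit Defensive.
Import GRing.Theory.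
Local Open Scope ring_scope.

Definition intersecting (F : finFieldType) (U : {fset {poly F}}) : Prop :=
  forall f1 f2 : {poly F}, f1 \in U -> f2 \in U -> exists x : F, f1.[x] = f2.[x].

From HB Require Import structures.
From mathcomp Require Import all_boot all_order all_algebra all_field.
From mathcomp Require Import finmap.
From mathcomp Require Import zify.
Import GRing.Theory.
Local Open Scope ring_scope.
Local Open Scope fset_scope.

(* If f(alpha) <> beta, each h with h`_k = c and h(alpha) = beta meets f at
   some point r_h <> alpha.  Such an h is determined by r_h together with its
   coefficients of x^2, ..., x^(k-1): two of them with the same data differ by
   a polynomial of degree at most 1 vanishing at the distinct points alpha and
   r_h.  Hence there are at most (q - 1) q^(k-2) of them. *)

Lemma size_sub_leq_of_coef_eq (R : nzRingType) (n : nat) (p q : {poly R}) :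
  (forall i, (n <= i)%N -> p`_i = q`_i) -> (size (p - q)%R <= n)%N.
Proof. by move=> eq_pq; apply/leq_sizeP => i le_ni; rewrite coefB eq_pq ?subrr. Qed.

Lemma size_le2_roots_eq0 {R : idomainType} {p : {poly R}} {a b : R} :
  a != b -> (size p <= 2)%N -> root p a -> root p b -> p = 0.
Proof.
move=> neq_ab size_p pa pb.
by apply: (@roots_geq_poly_eq0 _ _ [:: a; b]); rewrite /= ?pa ?pb ?inE ?neq_ab.
Qed.

Section MeetingOffAlpha.

Variables (F : finFieldType) (k : nat) (f : {poly F}) (c alpha beta : F).
Variable H : {fset {poly F}}.
Hypothesis H_size : forall h, h \in H -> (size h <= k.+1)%N.
Hypothesis H_coefk : forall h, h \in H -> h`_k = c.
Hypothesis H_alpha : forall h, h \in H -> h.[alpha] = beta.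
Hypothesis H_meet : forall h, h \in H -> exists2 x, x != alpha & h.[x] = f.[x].

Definition meet_point (h : {poly F}) : F :=
  odflt alpha [pick x | (x != alpha) && (h.[x] == f.[x])].

Lemma meet_pointP h : h \in H ->
  meet_point h != alpha /\ h.[meet_point h] = f.[meet_point h].
Proof.
move=> hH; have [x x_alpha hfx] := H_meet _ hH.
rewrite /meet_point; case: pickP => [y /andP[-> /eqP //] | /(_ x)].
by rewrite x_alpha hfx eqxx.
Qed.

Definition middle_coefs (h : {poly F}) : {ffun 'I_(k - 2) -> F} :=
  [ffun i : 'I_(k - 2) => h`_i.+2].

Lemma meet_point_middle_coefs_inj :
  {in H &, injective (fun h => (meet_point h, middle_coefs h))}.
Proof.
move=> h1 h2 h1H h2H [eq_r eq_mid]; apply/eqP; rewrite -subr_eq0; apply/eqP.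
have [r_alpha h1f] := meet_pointP _ h1H; have [_ h2f] := meet_pointP _ h2H.
apply: (size_le2_roots_eq0 r_alpha); rewrite /root ?hornerD ?hornerN.
- apply: size_sub_leq_of_coef_eq => i le2i.
  have [lt_ik | gt_ik | ->] := ltngtP i k; last by rewrite !H_coefk.
    have lt_i2 : (i - 2 < k - 2)%N by lia.
    by have /ffunP/(_ (Ordinal lt_i2)) := eq_mid; rewrite !ffunE /= -addn2 subnK.
  by rewrite !nth_default // (leq_trans (H_size _ _)).
- by rewrite h1f eq_r h2f subrr.
- by rewrite !H_alpha ?subrr.
Qed.

Lemma card_meeting_off_alpha : (#|` H| <= (#|F| - 1) * #|F| ^ (k - 2))%N.
Proof.
pose P := setX [set~ alpha] [set: {ffun 'I_(k - 2) -> F}].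
have /card_in_imfsetP/eqP <- := meet_point_middle_coefs_inj.
rewrite (leq_trans (fsubset_leq_card (B := [fset p in P]) _)) //.
  apply/fsubsetP => p /imfsetP[h hH ->].
  by rewrite !inE /= (meet_pointP _ hH).1.
by rewrite card_finset cardsX cardsC1 cardsT card_ffun card_ord subn1.
Qed.

End MeetingOffAlpha.

Theorem lemma8 (F : finFieldType) (k : nat) (hk : (2 <= k)%N)
  (U : {fset {poly F}})
  (hdeg : forall f : {poly F}, f \in U -> (size f <= k.+1)%N)
  (hint : intersecting U)
  (c alpha beta : F)
  (hmany : ((#|F| - 1) * #|F| ^ (k - 2) <
            #|` [fset h | h in U & ((h`_k == c) && (h.[alpha] == beta))%R]|)%N) :
  forall f : {poly F}, f \in U -> f`_k != c -> f.[alpha] = beta.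
Proof.
move=> f fU _; apply/eqP; apply: contraLR hmany => f_alpha; rewrite -leqNgt.
set H := [fset h | h in U & _].
have memH h : h \in H -> [/\ h \in U, h`_k = c & h.[alpha] = beta].
  by rewrite !inE => /andP[hU /andP[/eqP -> /eqP ->]].
apply: (@card_meeting_off_alpha _ _ f c alpha beta) => h /memH[hU hk_c h_alpha] //.
  exact: hdeg.
have [x hfx] := hint _ _ hU fU; exists x => //.
by apply: contra_neq f_alpha => x_alpha; rewrite -h_alpha -x_alpha hfx.
Qed.
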